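(* Let $m,n\in\mathbb{N}$, $q\in(-1,1)\setminus\{0\}$, $\alpha_\pm\in(-1,1)$ and $\beta_\pm\in\mathbb{R}$. Then the operator $H$ defined in the context is self-adjoint in $\ell^2(\Lambda^{(n,m)},\Delta)$, i.e. $\langle H\psi,\phi\rangle_\Delta=\langle\psi,H\phi\rangle_\Delta$ for all $\psi,\phi\in\ell^2(\Lambda^{(n,m)},\Delta)$.
   Context: Let $\Lambda^{(n,m)}=\{\mu\in\mathbb{Z}^n\mid m\ge\mu_1\ge\mu_2\ge\cdots\ge\mu_n\ge0\}$, and for $\mu\in\Lambda^{(n,m)}$ use the conventions $\mu_0\equiv m$, $\mu_{n+1}\equiv 0$. Let $e_1,\dots,e_n$ be the standard unit vectors of $\mathbb{Z}^n$, and $\delta_i=1$ if $i=0$, $\delta_i=0$ otherwise. The $q$-difference Toda hamiltonian $H$ acts on functions $\psi:\Lambda^{(n,m)}\to\mathbb{C}$ by $(H\psi)(\mu)=\bigl(\beta_+(1-q^{m-\mu_1})+\beta_-(1-q^{\mu_n})\bigr)\psi(\mu)+\sum_{1\le i\le n,\ \mu+e_i\in\Lambda^{(n,m)}}(1-\alpha_+q^{m-\mu_1-1})^{\delta_{i-1}}(1-q^{\mu_{i-1}-\mu_i})\psi(\mu+e_i)+\sum_{1\le i\le n,\ \mu-e_i\in\Lambda^{(n,m)}}(1-\alpha_-q^{\mu_n-1})^{\delta_{n-i}}(1-q^{\mu_i-\mu_{i+1}})\psi(\mu-e_i)$. With $(a;q)_0=1$, $(a;q)_l=(1-a)(1-aq)\cdots(1-aq^{l-1})$,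 define the positive weights $\Delta_\mu=\dfrac{(q;q)_m}{(\alpha_+;q)_{m-\mu_1}(\alpha_-;q)_{\mu_n}\prod_{0\le i\le n}(q;q)_{\mu_i-\mu_{i+1}}}$ for $\mu\in\Lambda^{(n,m)}$, and let $\ell^2(\Lambda^{(n,m)},\Delta)$ be the space of functions $\Lambda^{(n,m)}\to\mathbb{C}$ with inner product $\langle\psi,\phi\rangle_\Delta=\sum_{\mu\in\Lambda^{(n,m)}}\psi(\mu)\overline{\phi(\mu)}\Delta_\mu$. *)

From HB Require Import structures.
From mathcomp Require Import all_boot all_order all_algebra.
From mathcomp Require Import reals.
From mathcomp Require Export complex.
Set Implicit Arguments. Unset Strict Implicit. Unset Printing Implicit Defensive.
Import Order.TTheory GRing.Theory Num.Theory.
Local Open Scope ring_scope.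

(* A point mu of Z^n is a sequence of integers of size n;
   mu_i (1 <= i <= n) is nth 0 mu (i-1).  Extended coordinates with the
   conventions mu_0 = m and mu_{n+1} = 0. *)
Definition coord (m : nat) (mu : seq int) (i : nat) : int :=
  if i == 0%N then m%:Z else nth 0 mu i.-1.

(* Lambda^{(n,m)} : m >= mu_1 >= ... >= mu_n >= 0 *)
Definition inLambda (n m : nat) (mu : seq int) : bool :=
  (size mu == n) && [forall i : 'I_n.+1, coord m mu i.+1 <= coord m mu i].

Definition shiftp (mu : seq int) (k : nat) : seq int :=
  set_nth 0 mu k.-1 (nth 0 mu k.-1 + 1).
Definition shiftm (mu : seq int) (k : nat) : seq int :=
  set_nth 0 mu k.-1 (nth 0 mu k.-1 - 1).

Definition toC (R : rcfType) (x : R) : R[i] := (real_complex R x).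

Definition qpoch (R : pzRingType) (a q : R) (l : nat) : R :=
  \prod_(k < l) (1 - a * q ^+ k).

(* The finite set Lambda^{(n,m)}, enumerated through tuples *)
Definition tup2seq (n m : nat) (t : n.-tuple 'I_m.+1) : seq int :=
  [seq (nat_of_ord x)%:Z | x <- t].

Definition Hop (R : rcfType) (n m : nat) (q ap am bp bm : R)
    (psi : seq int -> R[i]) (mu : seq int) : R[i] :=
  let c := coord m mu in
  toC (bp * (1 - q ^ (m%:Z - c 1%N)) + bm * (1 - q ^ (c n))) * psi mu
  + \sum_(j < n | inLambda n m (shiftp mu j.+1))
      (toC ((if j.+1 == 1%N then 1 - ap * q ^ (m%:Z - c 1%N - 1) else 1)
        * (1 - q ^ (c j - c j.+1)))) * psi (shiftp mu j.+1)
  + \sum_(j < n | inLambda n m (shiftm mu j.+1))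
      (toC ((if j.+1 == n then 1 - am * q ^ (c n - 1) else 1)
        * (1 - q ^ (c j.+1 - c j.+2)))) * psi (shiftm mu j.+1).

(* The weights Delta_mu (exponents are nonnegative on Lambda) *)
Definition Delta (R : rcfType) (n m : nat) (q ap am : R) (mu : seq int) : R :=
  let c := coord m mu in
  qpoch q q m /
  (qpoch ap q `|m%:Z - c 1%N|%N * qpoch am q `|c n|%N
   * \prod_(i < n.+1) qpoch q q `|c i - c i.+1|%N).

Definition innerD (R : rcfType) (n m : nat) (q ap am : R)
    (psi phi : seq int -> R[i]) : R[i] :=
  \sum_(t : n.-tuple 'I_m.+1 | inLambda n m (tup2seq t))
     psi (tup2seq t) * Num.conj (phi (tup2seq t))
     * toC (Delta n m q ap am (tup2seq t)).

(* H is a nearest-neighbour operator on the finite set Lambda: a real diagonal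
   part plus hops mu -> mu + e_j with coefficient a+_j(mu) and mu -> mu - e_j with
   coefficient a-_j(mu).  Such an operator is symmetric for the weights Delta as
   soon as detailed balance a+_j(mu) Delta_mu = a-_j(mu + e_j) Delta_(mu + e_j)
   holds: the substitution nu = mu + e_j turns the raising part of <H psi, phi>
   into the lowering part of <psi, H phi>.  For the Toda weights, detailed balance
   follows from (a;q)_(l+1) = (a;q)_l (1 - a q^l), since moving from mu to mu + e_j
   only changes the factors (q;q)_(mu_(j-1) - mu_j) and (q;q)_(mu_j - mu_(j+1)) of
   the denominator of Delta and, for j = 1 or j = n, (alpha+;q)_(m - mu_1) or
   (alpha-;q)_(mu_n). *)

From Pilot Require Import Defs.
From HB Require Import structures.
From mathcomp Require Import all_boot all_order all_algebra.
From mathcomp Require Import reals complex ring.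
Import Order.TTheory GRing.Theory Num.Theory.
(* Imported again so that [Defs.coord] shadows [vector.coord]. *)
Import Pilot.Defs.
Local Open Scope ring_scope.
Set Implicit Arguments. Unset Strict Implicit.

Section DetailedBalance.
Variables (C : numClosedFieldType) (T : eqType) (n : nat).
Variables (L : seq T) (P : pred T) (up down : 'I_n -> T -> T).
Hypothesis mem_L : forall s, (s \in L) = P s.
Hypothesis uniq_L : uniq L.
Hypothesis upK : forall {j s}, P s -> P (up j s) -> down j (up j s) = s.
Hypothesis downK : forall {j s}, P s -> P (down j s) -> up j (down j s) = s.

Lemma perm_filter_up_down j :
  perm_eq [seq t <- L | P (down j t)] [seq up j s | s <- L & P (up j s)].
Proof.
apply: uniq_perm; first exact: filter_uniq.
  rewrite map_inj_in_uniq ?filter_uniq // => s s'.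
  rewrite !mem_filter !mem_L => /andP[Pus Ps] /andP[Pus' Ps'] eq_up.
  by rewrite -(upK Ps Pus) eq_up upK.
move=> t; apply/idP/mapP.
  rewrite mem_filter mem_L => /andP[Pdt Pt].
  exists (down j t); last by rewrite downK.
  by rewrite mem_filter mem_L downK ?Pt ?Pdt.
by case=> s; rewrite mem_filter mem_L => /andP[Pus Ps] ->; rewrite mem_filter mem_L upK ?Ps ?Pus.
Qed.

Lemma sum_up_down_at j (F : T -> T -> C) :
  \sum_(s <- L | P (up j s)) F s (up j s) = \sum_(t <- L | P (down j t)) F (down j t) t.
Proof.
rewrite -(big_filter _ (fun t => P (down j t))) (perm_big _ (perm_filter_up_down j)).
rewrite big_map -(big_filter _ (fun s => P (up j s))); apply: eq_big_seq => s.
by rewrite mem_filter mem_L => /andP[Pus Ps]; rewrite upK.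
Qed.

Lemma sum_up_down (G : 'I_n -> T -> T -> C) :
  \sum_(s <- L) \sum_(j < n | P (up j s)) G j s (up j s)
  = \sum_(t <- L) \sum_(j < n | P (down j t)) G j (down j t) t.
Proof.
rewrite (exchange_big_dep xpredT) // [RHS](exchange_big_dep xpredT) //.
by apply: eq_bigr => j _; apply: sum_up_down_at.
Qed.

Variables (d D : T -> C) (a_up a_down : 'I_n -> T -> C).
Hypothesis d_real : forall s, (d s)^* = d s.
Hypothesis D_real : forall s, (D s)^* = D s.
Hypothesis a_down_real : forall j s, (a_down j s)^* = a_down j s.
Hypothesis balance : forall {j s}, P s -> P (up j s) ->
  a_up j s * d s = a_down j (up j s) * d (up j s).

Definition wdot (f g : T -> C) : C := \sum_(s <- L) f s * (g s)^* * d s.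

Definition raise (psi : T -> C) (s : T) : C :=
  \sum_(j < n | P (up j s)) a_up j s * psi (up j s).
Definition lower (psi : T -> C) (s : T) : C :=
  \sum_(j < n | P (down j s)) a_down j s * psi (down j s).
Definition jacobi_op (psi : T -> C) (s : T) : C :=
  D s * psi s + raise psi s + lower psi s.

Lemma wdot_conj f g : (wdot f g)^* = wdot g f.
Proof.
rewrite rmorph_sum; apply: eq_bigr => s _.
by rewrite !rmorphM /= conjCK d_real [_ * g s]mulrC.
Qed.

Lemma wdotDl f g h : wdot (fun s => f s + g s) h = wdot f h + wdot g h.
Proof. by rewrite -big_split; apply: eq_bigr => s _; rewrite !mulrDl. Qed.

Lemma wdotDr f g h : wdot h (fun s => f s + g s) = wdot h f + wdot h g.
Proof. by rewrite -big_split; apply: eq_bigr => s _; rewrite rmorphD /= !mulrDr !mulrDl. Qed.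

Lemma wdot_diag psi phi : wdot (fun s => D s * psi s) phi = wdot psi (fun s => D s * phi s).
Proof. by apply: eq_bigr => s _; rewrite rmorphM /= D_real; ring. Qed.

Lemma wdot_raise psi phi : wdot (raise psi) phi = wdot psi (lower phi).
Proof.
rewrite /wdot /raise; under eq_bigr => s _ do rewrite !mulr_suml.
rewrite (sum_up_down (fun j s t => a_up j s * psi t * (phi s)^* * d s)).
apply: eq_big_seq => t; rewrite mem_L => Pt.
rewrite rmorph_sum mulr_sumr mulr_suml; apply: eq_bigr => j Pdt.
have := balance (j := j) Pdt; rewrite downK // => /(_ Pt) bal_t.
transitivity (psi t * (phi (down j t))^* * (a_up j (down j t) * d (down j t))); first by ring.
by rewrite bal_t rmorphM /= a_down_real; ring.
Qed.

Lemma wdot_lower psi phi : wdot (lower psi) phi = wdot psi (raise phi).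
Proof. by rewrite -[RHS]conjCK wdot_conj wdot_raise wdot_conj. Qed.

Lemma jacobi_op_selfadj psi phi : wdot (jacobi_op psi) phi = wdot psi (jacobi_op phi).
Proof.
rewrite !wdotDl !wdotDr wdot_diag wdot_raise wdot_lower.
by rewrite -!addrA [X in _ + X]addrC.
Qed.

End DetailedBalance.

Lemma coord_shiftp (m : nat) (s : seq int) (k i : nat) : (0 < k <= size s)%N ->
  coord m (shiftp s k) i = if i == k then coord m s i + 1 else coord m s i.
Proof.
case: k => [|k] // _; rewrite /coord /shiftp; case: i => [|i] //=.
by rewrite nth_set_nth /= eqSS; case: eqP => [->|].
Qed.

Lemma size_shiftp (s : seq int) (k : nat) : (0 < k <= size s)%N -> size (shiftp s k) = size s.
Proof. by case: k => [|k] // /andP[_ k_le]; rewrite size_set_nth; apply/maxn_idPr. Qed.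

Lemma size_shiftm (s : seq int) (k : nat) : (0 < k <= size s)%N -> size (shiftm s k) = size s.
Proof. by case: k => [|k] // /andP[_ k_le]; rewrite size_set_nth; apply/maxn_idPr. Qed.

Lemma shiftpK (s : seq int) (k : nat) : (0 < k <= size s)%N -> shiftm (shiftp s k) k = s.
Proof.
move=> k_s; apply: (@eq_from_nth _ 0); first by rewrite size_shiftm size_shiftp.
by move=> i _; rewrite !nth_set_nth /= eqxx addrK nth_set_nth /=; case: ifP => [/eqP ->|->].
Qed.

Lemma shiftmK (s : seq int) (k : nat) : (0 < k <= size s)%N -> shiftp (shiftm s k) k = s.
Proof.
move=> k_s; apply: (@eq_from_nth _ 0); first by rewrite size_shiftp size_shiftm.
by move=> i _; rewrite !nth_set_nth /= eqxx subrK nth_set_nth /=; case: ifP => [/eqP ->|->].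
Qed.

Lemma size_inLambda (n m : nat) (s : seq int) : inLambda n m s -> size s = n.
Proof. by case/andP=> /eqP. Qed.

Lemma coord_out (m : nat) (s : seq int) (i : nat) : (size s < i)%N -> coord m s i = 0.
Proof. by case: i => [|i] // lt_s_i; rewrite /coord /= nth_default. Qed.

Lemma coord_nonincr (n m : nat) (s : seq int) : inLambda n m s ->
  {homo coord m s : i j / (i <= j)%N >-> j <= i}.
Proof.
case/andP=> /eqP size_s /forallP chain; apply: homo_leq => [//|y x z|i].
  by move=> le_yx le_zy; apply: le_trans le_zy le_yx.
have [le_in|lt_ni] := leqP i n; first by have := chain (inord i); rewrite inordK.
by rewrite !coord_out ?size_s // ltnW.
Qed.

Lemma coord_ge0 (n m : nat) (s : seq int) (i : nat) : inLambda n m s -> 0 <= coord m s i.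
Proof.
move=> s_in; have out : (size s < (maxn i n).+1)%N by rewrite (size_inLambda s_in) ltnS leq_maxr.
by rewrite -(coord_out m out) (coord_nonincr s_in) // leqW // leq_maxl.
Qed.

Lemma coord_le (n m : nat) (s : seq int) (i : nat) : inLambda n m s -> coord m s i <= m%:Z.
Proof. by move=> s_in; apply: (coord_nonincr s_in (leq0n i)). Qed.

Lemma mem_inLambda_bounds (n m : nat) (s : seq int) (z : int) :
  inLambda n m s -> z \in s -> 0 <= z <= m%:Z.
Proof.
move=> s_in z_s; have -> : z = coord m s (index z s).+1 by rewrite /coord /= nth_index.
by rewrite (coord_ge0 _ s_in) (coord_le _ s_in).
Qed.

Definition Lambda_seq (n m : nat) : seq (seq int) :=
  [seq tup2seq t | t <- enum (fun t : n.-tuple 'I_m.+1 => inLambda n m (tup2seq t))].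

Lemma tup2seq_inj (n m : nat) : injective (@tup2seq n m).
Proof.
move=> t1 t2 eq_t; apply/val_inj/(inj_map val_inj)/(@inj_map _ _ Posz) => [x y [] //|].
by rewrite -!map_comp.
Qed.

Lemma uniq_Lambda_seq (n m : nat) : uniq (Lambda_seq n m).
Proof. by rewrite map_inj_uniq ?enum_uniq //; apply: tup2seq_inj. Qed.

Lemma mem_Lambda_seq (n m : nat) (s : seq int) : (s \in Lambda_seq n m) = inLambda n m s.
Proof.
apply/mapP/idP => [[t] | s_in]; first by rewrite mem_enum => ? ->.
have size_t : size [seq inord `|z|%N : 'I_m.+1 | z <- s] == n.
  by rewrite size_map (size_inLambda s_in).
have t_s : tup2seq (Tuple size_t) = s.
  rewrite /tup2seq /= -map_comp; apply: map_id_in => z z_s /=.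
  have /andP[z_ge0 z_le] := mem_inLambda_bounds s_in z_s.
  by rewrite inordK ?gez0_abs // ltnS -lez_nat gez0_abs.
by exists (Tuple size_t); rewrite ?mem_enum ?unfold_in /= t_s.
Qed.

Lemma innerD_wdot (R : rcfType) (n m : nat) (q ap am : R) (psi phi : seq int -> R[i]) :
  innerD n m q ap am psi phi
  = wdot (Lambda_seq n m) (fun s => toC (Delta n m q ap am s)) psi phi.
Proof. by rewrite /innerD /wdot big_map big_enum. Qed.

Lemma qpochS (R : pzRingType) (a q : R) (l : nat) :
  qpoch a q l.+1 = qpoch a q l * (1 - a * q ^+ l).
Proof. by rewrite /qpoch big_ord_recr. Qed.

Lemma qpoch_neq0 (R : numDomainType) (a q : R) (l : nat) :
  `|a| < 1 -> `|q| <= 1 -> qpoch a q l != 0.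
Proof.
move=> a_lt1 q_le1; rewrite /qpoch.
apply: (big_ind (fun y => y != 0)); [exact: oner_neq0 | exact: mulf_neq0 |].
move=> i _; rewrite subr_eq0; apply: contraTneq a_lt1 => one_eq.
have : `|a * q ^+ i| <= `|a| by rewrite normrM normrX ler_piMr // exprn_ile1.
by rewrite -one_eq normr1 => /le_gtF ->.
Qed.

Lemma qpoch_abs_succ (R : unitRingType) (a q : R) (x : int) : 0 <= x ->
  qpoch a q `|(x + 1)%R|%N = qpoch a q `|x|%N * (1 - a * q ^ x).
Proof. by case: x => // k _; rewrite -PoszD addn1 qpochS exprnP. Qed.

Lemma exprz_succ (R : unitRingType) (q : R) (x : int) : 0 <= x -> q ^ (x + 1) = q * q ^ x.
Proof. by case: x => // k _; rewrite -PoszD addn1 -!exprnP exprS. Qed.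

Lemma balance_of_factors (R : comPzRingType) (x y z w a a' b b' p p' : R) :
  x * a' = a -> b' = z * b -> p' * y = p * w ->
  (x * y) * (a' * b' * p') = (z * w) * (a * b * p).
Proof.
move=> <- -> eq_p; transitivity (x * a' * z * b * (p' * y)); first by ring.
by rewrite eq_p; ring.
Qed.

Section Weights.
Variables (R : rcfType) (n m : nat) (q ap am : R).

Definition Delta_den (s : seq int) : R :=
  qpoch ap q `|m%:Z - coord m s 1|%N * qpoch am q `|coord m s n|%N
  * \prod_(i < n.+1) qpoch q q `|coord m s i - coord m s i.+1|%N.

Definition raise_coef (j : 'I_n) (s : seq int) : R :=
  (if j.+1 == 1%N then 1 - ap * q ^ (m%:Z - coord m s 1%N - 1) else 1)
  * (1 - q ^ (coord m s j - coord m s j.+1)).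

Definition lower_coef (j : 'I_n) (s : seq int) : R :=
  (if j.+1 == n then 1 - am * q ^ (coord m s n - 1) else 1)
  * (1 - q ^ (coord m s j.+1 - coord m s j.+2)).

Lemma qpoch_ap_shift (c c' : nat -> int) (k : nat) :
  (forall i, c' i = if i == k then c i + 1 else c i) -> c' 1%N <= m%:Z ->
  (if k == 1%N then 1 - ap * q ^ (m%:Z - c 1%N - 1) else 1) * qpoch ap q `|m%:Z - c' 1%N|%N
  = qpoch ap q `|m%:Z - c 1%N|%N.
Proof.
move=> c'E; rewrite c'E eq_sym; case: eqP => _; last by rewrite mul1r.
set x := m%:Z - (c 1%N + 1) => c1_le; have x_ge0 : 0 <= x by rewrite /x subr_ge0.
have -> : m%:Z - c 1%N - 1 = x by rewrite /x opprD addrA.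
have -> : m%:Z - c 1%N = x + 1 by rewrite /x opprD addrA subrK.
by rewrite qpoch_abs_succ //; ring.
Qed.

Lemma qpoch_am_shift (c c' : nat -> int) (k : nat) :
  (forall i, c' i = if i == k then c i + 1 else c i) -> 0 <= c n ->
  qpoch am q `|c' n|%N
  = (if k == n then 1 - am * q ^ (c' n - 1) else 1) * qpoch am q `|c n|%N.
Proof.
move=> c'E cn_ge0; rewrite c'E eq_sym; case: eqP => _; last by rewrite mul1r.
have -> : c n + 1 - 1 = c n by ring.
by rewrite qpoch_abs_succ //; ring.
Qed.

Lemma prod_qpoch_shift (c c' : nat -> int) (j : nat) : (j < n)%N ->
  (forall i, c' i = if i == j.+1 then c i + 1 else c i) ->
  c j.+1 < c j -> c j.+2 <= c j.+1 ->
  (\prod_(i < n.+1) qpoch q q `|c' i - c' i.+1|%N) * (1 - q ^ (c j - c j.+1))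
  = (\prod_(i < n.+1) qpoch q q `|c i - c i.+1|%N) * (1 - q ^ (c' j.+1 - c' j.+2)).
Proof.
move=> lt_jn c'E lt_c ge_c; have le_jn := ltnW lt_jn.
have neq_j : (inord j.+1 : 'I_n.+1) != inord j by rewrite -val_eqE /= !inordK // gtn_eqF.
rewrite (bigD1 (inord j)) // (bigD1 (inord j.+1)) //= [in RHS](bigD1 (inord j)) //=.
rewrite [in RHS](bigD1 (inord j.+1)) //= !inordK //.
rewrite (eq_bigr (fun i : 'I_n.+1 => qpoch q q `|c i - c i.+1|%N)); last first.
  move=> i /andP[]; rewrite -!val_eqE /= !inordK // => ne_ij ne_ij1.
  by rewrite !c'E eqSS (negbTE ne_ij) (negbTE ne_ij1).
rewrite !c'E eqxx (ltn_eqF (ltnSn j)) (gtn_eqF (ltnSn j.+1)).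
set x := c j - (c j.+1 + 1); set y := c j.+1 - c j.+2.
have x_ge0 : 0 <= x by rewrite /x subr_ge0 lezD1.
have y_ge0 : 0 <= y by rewrite subr_ge0.
have -> : c j - c j.+1 = x + 1 by rewrite /x opprD addrA subrK.
have -> : c j.+1 + 1 - c j.+2 = y + 1 by rewrite addrAC.
by rewrite !qpoch_abs_succ // !exprz_succ //; ring.
Qed.

Lemma Delta_den_balance (j : 'I_n) (s : seq int) :
  inLambda n m s -> inLambda n m (shiftp s j.+1) ->
  raise_coef j s * Delta_den (shiftp s j.+1) = lower_coef j (shiftp s j.+1) * Delta_den s.
Proof.
move=> s_in s'_in; have j_s : (0 < j.+1 <= size s)%N by rewrite (size_inLambda s_in) ltn_ord.
have c'E := fun i => coord_shiftp m i j_s.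
have lt_c : coord m s j.+1 < coord m s j.
  have := coord_nonincr s'_in (leqnSn j).
  by rewrite !c'E eqxx (ltn_eqF (ltnSn j)) -lezD1.
apply: balance_of_factors.
- exact: qpoch_ap_shift c'E (coord_le _ s'_in).
- exact: qpoch_am_shift c'E (coord_ge0 _ s_in).
- exact: prod_qpoch_shift c'E lt_c (coord_nonincr s_in (leqnSn _)).
Qed.

Hypotheses (q_lt1 : `|q| < 1) (ap_lt1 : `|ap| < 1) (am_lt1 : `|am| < 1).

Lemma Delta_den_neq0 (s : seq int) : Delta_den s != 0.
Proof.
rewrite /Delta_den !mulf_neq0 ?qpoch_neq0 ?ltW //.
by rewrite prodf_seq_neq0; apply/allP => i _; rewrite qpoch_neq0 ?ltW.
Qed.

Lemma Delta_balance (j : 'I_n) (s : seq int) :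
  inLambda n m s -> inLambda n m (shiftp s j.+1) ->
  raise_coef j s * Delta n m q ap am s
  = lower_coef j (shiftp s j.+1) * Delta n m q ap am (shiftp s j.+1).
Proof.
move=> s_in s'_in; have := Delta_den_balance s_in s'_in.
have den_s := Delta_den_neq0 s; have den_s' := Delta_den_neq0 (shiftp s j.+1).
rewrite /Delta -/(Delta_den s) -/(Delta_den (shiftp s j.+1)) => den_bal.
set Q := qpoch q q m.
transitivity (raise_coef j s * Delta_den (shiftp s j.+1) * Q
              / (Delta_den s * Delta_den (shiftp s j.+1))); first by field; rewrite den_s den_s'.
by rewrite den_bal; field; rewrite den_s den_s'.
Qed.

End Weights.

Lemma conj_toC (R : rcfType) (x : R) : (toC x)^* = toC x.
Proof. by rewrite conj_Creal // complex_real. Qed.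

Lemma Hop_jacobi (R : rcfType) (n m : nat) (q ap am bp bm : R) (psi : seq int -> R[i]) :
  Hop n m q ap am bp bm psi
  = jacobi_op (inLambda n m) (fun j s => shiftp s j.+1) (fun j s => shiftm s j.+1)
      (fun s => toC (bp * (1 - q ^ (m%:Z - coord m s 1)) + bm * (1 - q ^ coord m s n)))
      (fun j s => toC (@raise_coef R n m q ap j s))
      (fun j s => toC (@lower_coef R n m q am j s)) psi.
Proof. by []. Qed.

Unset Implicit Arguments.

Theorem proposition2p1 (R : realType) (m n : nat) (q ap am bp bm : R)
  (hq0 : q != 0) (hq : -1 < q < 1) (hap : -1 < ap < 1) (ham : -1 < am < 1)
  (psi phi : seq int -> R[i]) :
  innerD n m q ap am (Hop n m q ap am bp bm psi) phi
  = innerD n m q ap am psi (Hop n m q ap am bp bm phi).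
Proof.
(* The argument never inverts [q]. *)
have norm_lt1 (x : R) : -1 < x < 1 -> `|x| < 1 by rewrite ltr_norml.
have shift_ok (j : 'I_n) s : inLambda n m s -> (0 < j.+1 <= size s)%N.
  by move=> s_in; rewrite (size_inLambda s_in) ltn_ord.
rewrite !innerD_wdot !Hop_jacobi.
apply: jacobi_op_selfadj => [s | | j s s_in _ | j s s_in _ | s | s | j s | j s s_in s'_in].
- exact: mem_Lambda_seq.
- exact: uniq_Lambda_seq.
- by rewrite shiftpK ?shift_ok.
- by rewrite shiftmK ?shift_ok.
- exact: conj_toC.
- exact: conj_toC.
- exact: conj_toC.
- by rewrite /toC -!(rmorphM (real_complex R)) Delta_balance ?norm_lt1.
Qed.
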